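(* Let $(X,d)$ be a compact metric space containing infinitely many points, and let $C(X)$ be the space of continuous functions $f:X\to\mathbb{R}$ with the norm $\|f\|_\infty=\sup_{x\in X}|f(x)|$. For $f\in C(X)$ let $\omega(f,\delta)=\sup_{d(x,y)\le\delta}|f(x)-f(y)|$ and $\Omega(f)=\{\omega(f,\frac{1}{1+n})\}_{n=0}^\infty$. Then $\Omega$ satisfies Shapiro's theorem on $C(X)$: for every non-increasing sequence $\{\varepsilon_n\}$ of nonnegative reals with $\varepsilon_n\to0$ there exists $f\in C(X)$ with $\Omega(f)\in c_0$ and $\omega(f,\frac{1}{1+n})\neq\mathbf{O}(\varepsilon_n)$. *)

From HB Require Import structures.
From mathcomp Require Import all_boot all_order all_algebra.
From mathcomp Require Import all_classical all_reals all_analysis.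
Set Implicit Arguments. Unset Strict Implicit. Unset Printing Implicit Defensive.
Import Order.TTheory GRing.Theory Num.Theory.
Import numFieldTopology.Exports numFieldNormedType.Exports.
Local Open Scope classical_set_scope.
Local Open Scope ring_scope.

Definition modcont {R : realType} {X : metricType R} (f : X -> R) (delta : R) : R :=
  sup [set r : R | exists x y : X, mdist x y <= delta /\ r = `|f x - f y|].

(* Take a limit point a of X (it exists by compactness since X is infinite) and
   points x_n -> a, x_n <> a, with d(a, x_n) < 1/(n+1). Put
   s_n = sqrt(eps_n + 1/(n+1)), a non-increasing sequence tending to 0, and
   f(x) = sup_n min(s_n, s_n d(a, x) / d(a, x_n)).
   The n-th ramp vanishes at a and already reaches its plateau s_n at x_n, so
   omega(f, 1/(n+1)) >= f(x_n) - f(a) >= s_n, and s_n <= C eps_n <= C s_n^2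
   would force C s_n >= 1, contradicting s_n -> 0. On the other hand the ramps
   with n >= N are bounded by s_N and the finitely many others are Lipschitz,
   so |f x - f y| <= s_N + L_N d(x, y): f is continuous and omega(f, .) -> 0. *)
From HB Require Import structures.
From mathcomp Require Import all_boot all_order all_algebra.
From mathcomp Require Import all_classical all_reals all_analysis.
From mathcomp Require Import lra.
Set Implicit Arguments. Unset Strict Implicit. Unset Printing Implicit Defensive.
Import Order.TTheory GRing.Theory Num.Theory.
Import numFieldTopology.Exports numFieldNormedType.Exports.
Local Open Scope classical_set_scope.
Local Open Scope ring_scope.

Lemma compact_infinite_limit_point (R : realType) (X : metricType R) :
  compact [set: X] -> infinite_set [set: X] ->
  exists a : X, forall r : R, 0 < r -> exists x, x != a /\ mdist a x < r.
Proof.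
move=> Xcompact Xinf; pose F := fun B : set X => finite_set (~` B).
have F_filter : ProperFilter F.
  have F_filter : Filter F.
    split; first by rewrite /F setCT; exact: finite_set0.
      by move=> A B; rewrite /F cofinite_setI.
    by move=> A B; apply: sub_cofinite_set.
  by split => //; rewrite /F setC0.
have [a [_ a_cluster]] := Xcompact F F_filter (cofinite_setT _).
exists a => r r0.
have F_punctured : F [set~ a] by rewrite /F setCK; exact: finite_set1.
have [x [/= xa ax]] := a_cluster _ _ F_punctured (nbhsx_ballx a r r0).
by exists x; split; [apply/eqP | move: ax; rewrite ballEmdist].
Qed.

Section modulus_of_continuity.
Variables (R : realType) (X : metricType R) (f : X -> R).

Lemma modcont_ge (M : R) x y d : (forall u v, `|f u - f v| <= M) ->
  mdist x y <= d -> `|f x - f y| <= modcont f d.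
Proof.
move=> fM xy; apply: ub_le_sup; last by exists x, y.
by exists M => _ [u [v [_ ->]]].
Qed.

Lemma modcont_le (x0 : X) (B d : R) : 0 <= d ->
  (forall x y, mdist x y <= d -> `|f x - f y| <= B) -> modcont f d <= B.
Proof.
move=> d0 fB; apply: ge_sup; first by exists `|f x0 - f x0|, x0, x0; rewrite mdistxx.
by move=> _ [x [y [xy ->]]]; exact: fB.
Qed.

End modulus_of_continuity.

Section ramp_sup.
Variables (R : realType) (X : metricType R) (a : X) (s : nat -> R) (xs : nat -> X).
Hypothesis s_ge0 : forall n, 0 <= s n.
Hypothesis s_noninc : nonincreasing_seq s.
Hypothesis xs_neq : forall n, xs n != a.

Let slope n := s n / mdist a (xs n).
Let ramp n x := Num.min (s n) (slope n * mdist a x).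
Definition ramp_sup x := sup (range (fun n => ramp n x)).

Let slope_ge0 n : 0 <= slope n.
Proof. by rewrite divr_ge0 ?mdist_ge0. Qed.

Let ramp_ge0 n x : 0 <= ramp n x.
Proof. by rewrite le_min s_ge0 mulr_ge0 ?mdist_ge0. Qed.

Let ramp_le_plateau n x : ramp n x <= s n.
Proof. by rewrite ge_min lexx. Qed.

Let ramp_le0 n x : ramp n x <= s 0.
Proof. by apply: le_trans (ramp_le_plateau n x) _; apply: s_noninc. Qed.

Let ramp_le_sup n x : ramp n x <= ramp_sup x.
Proof.
apply: ub_le_sup; last by exists n.
by exists (s 0) => _ [m _ <-]; exact: ramp_le0.
Qed.

Let ramp_sup_ge0 x : 0 <= ramp_sup x.
Proof. exact: le_trans (ramp_ge0 0 x) (ramp_le_sup 0 x). Qed.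

Let ramp_sup_le x : ramp_sup x <= s 0.
Proof. by apply: ge_sup; [exists (ramp 0 x), 0%N | move=> _ [n _ <-]]. Qed.

Let ramp_sup_osc x y : `|ramp_sup x - ramp_sup y| <= s 0.
Proof.
have := ramp_sup_ge0 x; have := ramp_sup_ge0 y.
have := ramp_sup_le x; have := ramp_sup_le y.
by rewrite ler_norml => *; apply/andP; split; lra.
Qed.

Lemma ramp_sup_center : ramp_sup a = 0.
Proof.
apply/eqP; rewrite eq_le ramp_sup_ge0 andbT.
apply: ge_sup; first by exists (ramp 0 a), 0%N.
by move=> _ [n _ <-]; rewrite /ramp mdistxx mulr0 ge_min lexx orbT.
Qed.

Lemma ramp_sup_xs n : s n <= ramp_sup (xs n).
Proof.
apply: le_trans (ramp_le_sup n _); rewrite /ramp /slope divfK ?minxx //.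
by rewrite gt_eqF // mdist_gt0 eq_sym.
Qed.

Let ramp_lipschitz n x y : ramp n x <= ramp n y + slope n * mdist x y.
Proof.
have tri : mdist a x <= mdist a y + mdist y x by exact: metric_triangle.
rewrite -lerBlDr le_min; apply/andP; split; rewrite lerBlDr ge_min; apply/orP.
  by left; rewrite lerDl mulr_ge0 ?mdist_ge0.
by right; rewrite -mulrDr ler_wpM2l // [mdist x y]metric_sym.
Qed.

Let slope_bounded N : exists L, 0 <= L /\ forall n, (n < N)%N -> slope n <= L.
Proof.
elim: N => [|N [L [L0 HL]]]; first by exists 0.
exists (L + slope N); split; first by rewrite addr_ge0.
move=> n; rewrite ltnS leq_eqVlt => /orP [/eqP ->|/HL nL]; first by rewrite lerDr.
by rewrite (le_trans nL) // lerDl.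
Qed.

Lemma ramp_sup_almost_lipschitz N :
  exists L, 0 <= L /\ forall x y, `|ramp_sup x - ramp_sup y| <= s N + L * mdist x y.
Proof.
have [L [L0 HL]] := slope_bounded N.
have one_sided x y : ramp_sup x <= ramp_sup y + s N + L * mdist x y.
  apply: ge_sup; first by exists (ramp 0 x), 0%N.
  have Ld0 : 0 <= L * mdist x y by rewrite mulr_ge0 ?mdist_ge0.
  move=> _ [n _ <-]; case: (ltnP n N) => nN.
    have : slope n * mdist x y <= L * mdist x y by rewrite ler_wpM2r ?mdist_ge0 ?HL.
    have := ramp_lipschitz n x y; have := ramp_le_sup n y; have := s_ge0 N; lra.
  have := ramp_le_plateau n x; have := s_noninc nN; have := ramp_sup_ge0 y; lra.
exists L; split => // x y; rewrite ler_norml; apply/andP; split.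
  by have := one_sided y x; rewrite metric_sym; lra.
by have := one_sided x y; lra.
Qed.

Hypothesis s_cvg0 : s @ \oo --> 0.

Let s_eventually_le {e : R} : 0 < e -> exists N, s N <= e.
Proof.
move=> e0; have [N _ sN] := cvgr_lt 0 s_cvg0 _ e0.
by exists N; apply/ltW/sN; rewrite /= leqnn.
Qed.

Lemma ramp_sup_continuous : continuous ramp_sup.
Proof.
move=> x; apply/cvgrPdist_le => e e0.
have e20 : 0 < e / 2 by rewrite divr_gt0.
have [N sN] := s_eventually_le e20.
have [L [L0 HL]] := ramp_sup_almost_lipschitz N.
have L10 : 0 < L + 1 by rewrite ltr_wpDl.
apply/nbhs_ballP; exists (e / 2 / (L + 1)); first by rewrite /= divr_gt0.
move=> y; rewrite /= ballEmdist /= => xy.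
have : (L + 1) * mdist x y < e / 2 by rewrite mulrC -ltr_pdivlMr.
have := HL x y; have := mdist_ge0 x y; nra.
Qed.

Lemma modcont_ramp_sup_cvg0 (d : nat -> R) : (forall n, 0 <= d n) ->
  d @ \oo --> 0 -> (fun n => modcont ramp_sup (d n)) @ \oo --> 0.
Proof.
move=> d_ge0 d_cvg0; apply/cvgrPdist_le => e e0.
have e20 : 0 < e / 2 by rewrite divr_gt0.
have [N sN] := s_eventually_le e20.
have [L [L0 HL]] := ramp_sup_almost_lipschitz N.
have L10 : 0 < L + 1 by rewrite ltr_wpDl.
near=> n.
have dn : d n <= e / 2 / (L + 1).
  by apply: ltW; near: n; apply: cvgr_lt 0 d_cvg0 _ _; rewrite divr_gt0.
have w_ge0 : 0 <= modcont ramp_sup (d n).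
  have aa : mdist a a <= d n by rewrite mdistxx.
  exact: le_trans (normr_ge0 _) (modcont_ge ramp_sup_osc aa).
have w_le : modcont ramp_sup (d n) <= s N + L * d n.
  apply: (modcont_le a (d_ge0 n)) => x y xy.
  by apply: le_trans (HL x y) _; rewrite lerD2l ler_wpM2l.
rewrite sub0r normrN ger0_norm //.
have : (L + 1) * d n <= e / 2 by rewrite mulrC -ler_pdivlMr.
have := d_ge0 n; nra.
Unshelve. all: end_near.
Qed.

Lemma plateau_le_modcont n d : mdist a (xs n) <= d -> s n <= modcont ramp_sup d.
Proof.
move=> axd; apply: le_trans (ramp_sup_xs n) _.
by have := modcont_ge ramp_sup_osc axd; rewrite ramp_sup_center sub0r normrN ger0_norm.
Qed.

End ramp_sup.

Lemma cvg_sqrtr0 (R : realType) (u : nat -> R) :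
  u @ \oo --> 0 -> (fun n => Num.sqrt (u n)) @ \oo --> 0.
Proof. by move=> u0; rewrite -sqrtr0; apply: continuous_cvg => //; exact: sqrt_continuous. Qed.

Lemma sqrt_not_bigO (R : realType) (u v : nat -> R) :
  (forall n, 0 < u n) -> u @ \oo --> 0 -> (forall n, 0 <= v n <= u n) ->
  ~ exists C, \forall n \near \oo, Num.sqrt (u n) <= C * v n.
Proof.
move=> u_gt0 u0 v_bnd [C sqrt_le].
have C1 : 0 < `|C| + 1 by rewrite ltr_wpDl.
have C1V : 0 < (`|C| + 1)^-1 by rewrite invr_gt0.
have [n [le_n lt_n]] := filter_ex (filterI sqrt_le (cvgr_lt 0 (cvg_sqrtr0 u0) _ C1V)).
have /andP [v0 vu] := v_bnd n.
pose r := Num.sqrt (u n).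
have r_gt0 : 0 < r by rewrite sqrtr_gt0.
have r_le : r <= `|C| * (r * r).
  have -> : r * r = u n by rewrite -expr2 sqr_sqrtr ?ltW.
  apply: le_trans le_n _.
  by apply: le_trans (ler_norm _) _; rewrite normrM (ger0_norm v0) ler_wpM2l.
have : (`|C| + 1) * r < 1 by rewrite mulrC -ltr_pdivlMr // div1r.
have := normr_ge0 C; nra.
Qed.

Theorem mainTheorem8 (R : realType) (X : metricType R)
  (hcompact : compact [set: X]) (hinf : infinite_set [set: X])
  (eps : nat -> R)
  (eps_ge0 : forall n, 0 <= eps n)
  (eps_noninc : forall n, eps n.+1 <= eps n)
  (eps_cvg0 : eps @ \oo --> 0) :
  exists f : X -> R,
    continuous f /\
    (fun n : nat => modcont f (n.+1%:R^-1)) @ \oo --> 0 /\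
    ~ (exists C : R, \forall n \near \oo, modcont f (n.+1%:R^-1) <= C * eps n).
Proof.
have [a a_limit] := compact_infinite_limit_point hcompact hinf.
have /choice [xs xsP] : forall n, exists x, x != a /\ mdist a x < n.+1%:R^-1.
  by move=> n; apply: a_limit; rewrite invr_gt0.
pose u n := eps n + n.+1%:R^-1.
have u_gt0 n : 0 < u n by rewrite ltr_wpDl.
have u_cvg0 : u @ \oo --> 0 by rewrite -[0]addr0; apply: cvgD => //; exact: cvg_harmonic.
have s_noninc : nonincreasing_seq (fun n => Num.sqrt (u n)).
  apply/nonincreasing_seqP => n; apply: ler_wsqrtr; apply: lerD => //.
  by rewrite lef_pV2 ?posrE // ler_nat.
pose f := ramp_sup a (fun n => Num.sqrt (u n)) xs.
have s_ge0 n : 0 <= Num.sqrt (u n) by [].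
have s_cvg0 := cvg_sqrtr0 u_cvg0.
have xs_neq n := (xsP n).1.
exists f; split; first exact: ramp_sup_continuous.
split; first by apply: modcont_ramp_sup_cvg0 => //; exact: cvg_harmonic.
move=> [C HC]; apply: (sqrt_not_bigO (v := eps) u_gt0 u_cvg0) => [n|].
  by rewrite eps_ge0 /u lerDl invr_ge0 ler0n.
exists C; apply: filterS HC => n; apply: le_trans.
by apply: plateau_le_modcont => //; exact: ltW (xsP n).2.
Qed.
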